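(* Let $1\le q<p$ and suppose a subspace $X\subseteq\mathbb{R}^n$ is $(2k,\varepsilon)$-$\ell_p$-spread. Then $X$ is $(k,\varepsilon_q)$-$\ell_q$-spread for $\varepsilon_q=\varepsilon^2\left(\frac{k}{n}\right)^{1/q}$. In particular, if $X$ is $(\Omega(n),\Omega(1))$-$\ell_p$-spread, then $X$ is also $(\Omega(n),\Omega(1))$-$\ell_q$-spread for every $1\le q<p$.
   Context: A vector $y\in\mathbb{R}^n$ is $k$-sparse if $|\mathrm{supp}(y)|\le k$. A nonzero $x\in\mathbb{R}^n$ is $(k,\varepsilon)$-$\ell_p$-compressible if some $k$-sparse $y$ has $\|x-y\|_p\le\varepsilon\|x\|_p$, and $(k,\varepsilon)$-$\ell_p$-spread otherwise. A subspace $X$ is $(k,\varepsilon)$-$\ell_p$-spread if every nonzero $x\in X$ is $(k,\varepsilon)$-$\ell_p$-spread. *)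

From HB Require Import structures.
From mathcomp Require Import all_boot all_order all_algebra.
From mathcomp Require Import reals exp.
Set Implicit Arguments.
Unset Strict Implicit.
Unset Printing Implicit Defensive.
Import Order.TTheory GRing.Theory Num.Theory.
Local Open Scope ring_scope.

Section Spread.
Variables (R : realType) (n : nat).

Definition supp (y : 'rV[R]_n) : {set 'I_n} := [set i | y ord0 i != 0].

Definition ksparse (k : nat) (y : 'rV[R]_n) : bool := (#|supp y| <= k)%N.

Definition lpnorm (p : R) (x : 'rV[R]_n) : R :=
  (\sum_(i < n) `|x ord0 i| `^ p) `^ p^-1.

Definition compressible (p : R) (k : nat) (eps : R) (x : 'rV[R]_n) : Prop :=
  exists y : 'rV[R]_n, ksparse k y /\ lpnorm p (x - y) <= eps * lpnorm p x.

Definition spread (p : R) (k : nat) (eps : R) (x : 'rV[R]_n) : Prop :=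
  x != 0 /\ ~ compressible p k eps x.

Definition subspace_spread (p : R) (k : nat) (eps : R)
  (X : {vspace 'rV[R]_n}) : Prop :=
  forall x : 'rV[R]_n, x \in X -> x != 0 -> spread p k eps x.

End Spread.

From HB Require Import structures.
From mathcomp Require Import all_boot all_order all_algebra.
From mathcomp Require Import reals exp.
From mathcomp Require Import ring lra.

(* Let S be the support of a k-sparse y with |x - y|_q small, and U the k
   largest coordinates of x off S; keeping x on S ∪ U is 2k-sparse and leaves
   the tail V = ~S \ U.  With u = |x|^q and r = p/q > 1, each u_j on V is at
   most the mean of u over U, whence k^(r-1) Σ_V u^r <= (Σ_~S u)^r.  The
   l_q-hypothesis gives Σ_~S u <= eps_q^q Σ u, and the power-mean inequality
   n (Σ u / n)^r <= Σ u^r absorbs the factor k/n, leaving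
   Σ_V |x|^p <= eps^(2p) |x|_p^p.  As eps^2 <= eps when eps <= 1 (and every
   vector is (k, eps)-compressible when eps >= 1), x is (2k, eps)-compressible. *)

Set Implicit Arguments.
Unset Strict Implicit.
Unset Printing Implicit Defensive.

Import Order.TTheory GRing.Theory Num.Theory.
Local Open Scope ring_scope.

Lemma exists_top_subset (T : finType) d (O : orderType d) (f : T -> O)
    (A : {set T}) m :
  (m <= #|A|)%N -> exists2 U : {set T}, U \subset A /\ #|U| = m &
    {in U & A :\: U, forall i j, (f j <= f i)%O}.
Proof.
elim: m => [|m IHm] leA.
  by exists set0; [rewrite sub0set cards0 | move=> i j; rewrite inE].
have [U [sUA cardU] topU] := IHm (ltnW leA).
have /card_gt0P[j0 j0AU] : (0 < #|A :\: U|)%N.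
  by rewrite cardsD (setIidPr sUA) cardU subn_gt0.
case: (arg_maxP f j0AU) => j /setDP[jA jU] jmax.
exists (j |: U); first by rewrite subUset sub1set jA sUA cardsU1 jU cardU.
move=> i k; rewrite !inE negb_or => /predU1P[-> | iU] /andP[/andP[kj kU] kA].
  by apply: jmax; apply/setDP.
by apply: topU; rewrite // inE kU kA.
Qed.

Section PowerSums.
Variable R : realType.
Implicit Types (a b r s : R).

Lemma young_powR a b r : 0 <= a -> 0 <= b -> 1 < r ->
  a * b `^ (r - 1) <= a `^ r / r + b `^ r * (1 - r^-1).
Proof.
move=> a0 b0 r1; have r0 : 0 < r by lra.
have r'0 : 0 < r / (r - 1) by rewrite divr_gt0 ?subr_gt0.
have conj : r^-1 + (r / (r - 1))^-1 = 1.
  by rewrite invf_div mulrBl divff ?gt_eqF // mul1r addrC subrK.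
have := conjugate_powR a0 (powR_ge0 b (r - 1)) r0 r'0 conj.
rewrite -powRrM mulrCA divff ?subr_eq0 ?gt_eqF // mulr1 invf_div.
by rewrite mulrBl divff ?gt_eqF // mul1r.
Qed.

Lemma power_mean_powR (T : finType) (u : T -> R) r :
  (forall i, 0 <= u i) -> 1 < r ->
  #|T|%:R * ((\sum_i u i) / #|T|%:R) `^ r <= \sum_i u i `^ r.
Proof.
move=> u0 r1; have r0 : 0 < r by lra.
have [->|T0] := eqVneq #|T| 0%N.
  by rewrite mul0r sumr_ge0 // => i _; exact: powR_ge0.
set m := (\sum_i u i) / _.
have m0 : 0 <= m by rewrite divr_ge0 ?sumr_ge0.
have sum_u : \sum_i u i = #|T|%:R * m by rewrite mulrC divfK ?pnatr_eq0.
have : \sum_i u i * m `^ (r - 1) <= \sum_i (u i `^ r / r + m `^ r * (1 - r^-1)).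
  by apply: ler_sum => i _; exact: young_powR.
rewrite -mulr_suml big_split /= -mulr_suml sumr_const sum_u -mulrA mulr_powRB1 //.
set a := #|T|%:R * _; set P := \sum_i _.
rewrite [_ *+ _](_ : _ = a - a / r); last by rewrite -mulr_natl /a; ring.
move=> young_sum; have : a * r^-1 <= P * r^-1 by lra.
by rewrite ler_pM2r ?invr_gt0.
Qed.

Lemma ler_sum_subset (T : finType) (F : T -> R) (A B : {set T}) :
  (forall i, 0 <= F i) -> A \subset B -> \sum_(i in A) F i <= \sum_(i in B) F i.
Proof.
move=> F0 sAB; rewrite [X in _ <= X](big_setID A) (setIidPr sAB) lerDl.
exact: sumr_ge0.
Qed.

Section TopTail.
Variables (T : finType) (u : T -> R).
Hypothesis u_ge0 : forall i, 0 <= u i.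

Lemma sum_powR_top_tail r (A U : {set T}) :
  1 <= r -> U \subset A -> {in U & A :\: U, forall i j, u j <= u i} ->
  #|U|%:R `^ (r - 1) * \sum_(j in A :\: U) u j `^ r <= (\sum_(i in A) u i) `^ r.
Proof.
move=> r1 sUA topU; have r0 : 0 < r by apply: lt_le_trans r1.
set D := \sum_(i in A) u i.
have D0 : 0 <= D by exact: sumr_ge0.
have top_le_sum j : j \in A :\: U -> #|U|%:R * u j <= D.
  move=> jV; rewrite mulr_natl -sumr_const.
  apply: le_trans (ler_sum_subset u_ge0 sUA).
  by apply: ler_sum => i iU; apply: topU.
rewrite mulr_sumr; apply: le_trans (_ : \sum_(j in A :\: U) u j * D `^ (r - 1) <= _).
  apply: ler_sum => j jV.
  rewrite -[u j `^ r](mulr_powRB1 (u_ge0 j) r0) mulrCA -powRM ?ler0n //.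
  apply: ler_wpM2l => //.
  by apply: ge0_ler_powR; rewrite ?subr_ge0 ?nnegrE ?mulr_ge0 ?ler0n ?top_le_sum.
rewrite -mulr_suml -[X in _ <= X](mulr_powRB1 D0 r0).
apply: ler_wpM2r; first exact: powR_ge0.
exact: ler_sum_subset u_ge0 (subsetDl A U).
Qed.

Lemma sum_powR_tail_le r s (A U : {set T}) :
  1 < r -> 0 <= s -> U \subset A -> {in U & A :\: U, forall i j, u j <= u i} ->
  \sum_(i in A) u i <= s * #|U|%:R * ((\sum_i u i) / #|T|%:R) ->
  \sum_(j in A :\: U) u j `^ r <= s `^ r * \sum_i u i `^ r.
Proof.
move=> r1 s0 sUA topU sumA_le; have r0 : 0 < r by apply: lt_trans r1.
have rhs_ge0 : 0 <= s `^ r * \sum_i u i `^ r.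
  by rewrite mulr_ge0 ?powR_ge0 ?sumr_ge0 // => i _; apply: powR_ge0.
set k := #|U| in sumA_le *; set m := _ / _ in sumA_le.
have m0 : 0 <= m by rewrite divr_ge0 ?sumr_ge0.
have [k0|k_gt0] := posnP k.
  have U0 : U = set0 by apply/eqP; rewrite -cards_eq0 -/k k0.
  rewrite k0 mulr0 mul0r in sumA_le; rewrite U0 setD0.
  have sumA0 : \sum_(i in A) u i = 0 by apply: le_anti; rewrite sumA_le sumr_ge0.
  rewrite big1 // => j jA.
  by rewrite (psumr_eq0P (fun i _ => u_ge0 i) sumA0) // powR0 // gt_eqF.
have k_pow_gt0 : 0 < k%:R `^ (r - 1) by rewrite powR_gt0 ?ltr0n.
rewrite -(ler_pM2l k_pow_gt0); apply: le_trans (sum_powR_top_tail (ltW r1) sUA topU) _.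
apply: le_trans (_ : (s * k%:R * m) `^ r <= _).
  have skm0 : 0 <= s * k%:R * m := mulr_ge0 (mulr_ge0 s0 (ler0n _ _)) m0.
  by apply: (ge0_ler_powR (ltW r0) _ _ sumA_le); rewrite nnegrE // sumr_ge0.
have km_le : k%:R * m `^ r <= \sum_i u i `^ r.
  apply: le_trans (power_mean_powR u_ge0 r1).
  by rewrite ler_wpM2r ?powR_ge0 // ler_nat max_card.
rewrite (powRM r (mulr_ge0 s0 (ler0n _ _)) m0) (powRM r s0 (ler0n _ _)).
rewrite -(mulr_powRB1 (ler0n _ k) r0).
rewrite [X in X <= _](_ : _ = k%:R `^ (r - 1) * (s `^ r * (k%:R * m `^ r))); last by ring.
by rewrite ler_wpM2l ?powR_ge0 // ler_wpM2l ?powR_ge0.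
Qed.

End TopTail.

End PowerSums.

Section Compressibility.
Variables (R : realType) (n : nat).
Implicit Types (x y z : 'rV[R]_n) (p q eps : R).

Lemma lpnorm_le_scale p eps z x : 0 < p -> 0 <= eps ->
  (lpnorm p z <= eps * lpnorm p x) =
  (\sum_i `|z ord0 i| `^ p <= eps `^ p * \sum_i `|x ord0 i| `^ p).
Proof.
move=> p0 eps0.
have sum_ge0 (w : 'rV[R]_n) : 0 <= \sum_i `|w ord0 i| `^ p.
  by apply: sumr_ge0 => i _; apply: powR_ge0.
rewrite /lpnorm -{1}(powRr1 eps0) -(mulfV (lt0r_neq0 p0)) powRrM -powRM ?powR_ge0 //.
have pV0 : 0 < p^-1 by rewrite invr_gt0.
by apply: (le_mono_in (gt0_ltr_powR pV0)); rewrite nnegrE ?mulr_ge0 ?powR_ge0.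
Qed.

Definition restrict (S : {set 'I_n}) x : 'rV[R]_n :=
  \row_i (if i \in S then x ord0 i else 0).

Lemma supp_restrict S x : supp (restrict S x) \subset S.
Proof.
by apply/subsetP => i; rewrite inE mxE; case: ifP => //; rewrite eqxx.
Qed.

Lemma sum_powR_sub_restrict p S x : p != 0 ->
  \sum_i `|(x - restrict S x) ord0 i| `^ p = \sum_(i in ~: S) `|x ord0 i| `^ p.
Proof.
move=> p_neq0; rewrite (bigID (mem S)) /= big1 ?add0r => [|i iS].
  by apply: eq_big => [i|i iS]; rewrite ?inE // !mxE (negbTE iS) subr0.
by rewrite !mxE iS subrr normr0 powR0.
Qed.

Lemma sum_powR_off_supp_le p x y :
  \sum_(i in ~: supp y) `|x ord0 i| `^ p <= \sum_i `|(x - y) ord0 i| `^ p.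
Proof.
rewrite [X in _ <= X](bigID (mem (~: supp y))) /=.
apply: ler_wpDr; first by apply: sumr_ge0 => i _; apply: powR_ge0.
apply/ler_sum => i; rewrite !inE negbK => /eqP yi0.
by rewrite !mxE yi0 subr0.
Qed.

Lemma compressible_ge1 p k eps x : 1 <= eps -> compressible p k eps x.
Proof.
move=> eps1; exists 0; split.
  rewrite /ksparse (_ : supp 0 = set0) ?cards0 //.
  by apply/setP => i; rewrite !inE mxE eqxx.
by rewrite subr0 ler_peMl ?powR_ge0.
Qed.

Lemma compressible_sparse p k eps x : 0 < p -> 0 <= eps ->
  ksparse k x -> compressible p k eps x.
Proof.
move=> p0 eps0 xk; exists x; split => //.
rewrite lpnorm_le_scale // big1 ?mulr_ge0 ?powR_ge0 ?sumr_ge0 // => i _.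
  exact: powR_ge0.
by rewrite subrr mxE normr0 powR0 ?gt_eqF.
Qed.

Lemma compressible_lp_of_lq p q delta eps k x y :
  0 < q -> q < p -> 0 <= delta <= eps -> ksparse k y ->
  lpnorm q (x - y) <= delta * (k%:R / n%:R) `^ q^-1 * lpnorm q x ->
  compressible p (2 * k) eps x.
Proof.
move=> q0 qp /andP[delta0 delta_eps] yk; have p0 : 0 < p := lt_trans q0 qp.
have kn0 : 0 <= k%:R / n%:R :> R by rewrite divr_ge0.
rewrite lpnorm_le_scale ?mulr_ge0 ?powR_ge0 // powRM ?powR_ge0 //.
rewrite -powRrM mulVf ?lt0r_neq0 // powRr1 // => sum_sub_le.
set S := supp y.
have [small|big] := leqP #|~: S| k.
  apply: compressible_sparse; rewrite ?(le_trans delta0) //.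
  rewrite /ksparse (leq_trans (max_card _)) // -(cardsC S) mul2n -addnn.
  exact: leq_add.
have [U [sU cardU] topU] := exists_top_subset (fun i => `|x ord0 i|) (ltnW big).
exists (restrict (S :|: U) x); split.
  rewrite /ksparse (leq_trans (subset_leq_card (supp_restrict _ _))) //.
  by rewrite (leq_trans (leq_card_setU _ _)) // cardU mul2n -addnn leq_add.
rewrite lpnorm_le_scale ?(le_trans delta0) // sum_powR_sub_restrict ?lt0r_neq0 //.
rewrite setCU -setDE.
set u := fun i => `|x ord0 i| `^ q.
have u_ge0 i : 0 <= u i by apply: powR_ge0.
have u_pow i : u i `^ (p / q) = `|x ord0 i| `^ p.
  by rewrite -powRrM mulrC divfK ?lt0r_neq0.
rewrite -!(eq_bigr _ (fun i _ => u_pow i)).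
apply: le_trans (_ : (delta `^ q) `^ (p / q) * \sum_i u i `^ (p / q) <= _).
  apply: (sum_powR_tail_le u_ge0) => //.
  - by rewrite ltr_pdivlMr ?mul1r.
  - exact: powR_ge0.
  - by move=> i j iU jV; apply: (ge0_ler_powR (ltW q0)); rewrite ?nnegrE // topU.
  rewrite cardU card_ord.
  rewrite (_ : _ * _ * _ = delta `^ q * (k%:R / n%:R) * \sum_i u i); last by ring.
  exact: le_trans (sum_powR_off_supp_le q x y) sum_sub_le.
rewrite -powRrM [q * _]mulrC divfK ?lt0r_neq0 //.
apply: ler_wpM2r; first by apply: sumr_ge0 => i _; apply: powR_ge0.
by apply: (ge0_ler_powR (ltW p0)); rewrite ?nnegrE ?(le_trans delta0).
Qed.

End Compressibility.

Theorem proposition3p7 (R : realType) (n k : nat) (p q eps : R)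
  (X : {vspace 'rV[R]_n}) :
  1 <= q -> q < p -> 0 <= eps ->
  subspace_spread p (2 * k)%N eps X ->
  subspace_spread q k (eps ^+ 2 * (k%:R / n%:R) `^ q^-1) X.
Proof.
move=> q1 qp eps0 X_spread x xX x_neq0; split=> // -[y [yk xy_le]].
apply: (X_spread x xX x_neq0).2.
have [eps1|/ltW eps1] := lerP eps 1; last exact: compressible_ge1.
apply: (compressible_lp_of_lq _ qp _ yk xy_le); first exact: lt_le_trans q1.
by rewrite sqr_ge0 expr2 ler_piMr.
Qed.
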